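(* Let $\mathrm{E}$ be $\mathrm{x}\simeq\mathrm{y}\diamond((\mathrm{y}\diamond(\mathrm{x}\diamond\mathrm{z}))\diamond\mathrm{z})$ and $\mathrm{E}'$ be $\mathrm{x}\simeq(\mathrm{x}\diamond((\mathrm{x}\diamond\mathrm{x})\diamond\mathrm{x}))\diamond\mathrm{x}$. Then: (a) the magma with carrier $\mathbb{Z}$ and operation $x\diamond y=2x-\lfloor y/2\rfloor$ satisfies $\mathrm{E}$ but not $\mathrm{E}'$, so $\mathrm{E}$ does not imply $\mathrm{E}'$; (b) every finite magma satisfying $\mathrm{E}$ satisfies $\mathrm{E}'$.
   Context: A magma is a set with a binary operation $\diamond$; it satisfies a law if the identity holds for all assignments of variables. *)

From Stdlib Require Import ZArith.
From mathcomp Require Import all_boot.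

Definition satisfies_E {T : Type} (op : T -> T -> T) : Prop :=
  forall x y z : T, x = op y (op (op y (op x z)) z).

Definition satisfies_E' {T : Type} (op : T -> T -> T) : Prop :=
  forall x : T, x = op (op x (op (op x x) x)) x.

Definition zop (x y : Z) : Z := (2 * x - Z.div y 2)%Z.

(* On Z, writing each argument of Z.div as 2q + r with 0 <= r < 2 turns E
   into a linear identity, while x = 1 violates E'.  For (b): instantiating E
   at (x, y, z) := (w, y, w) shows that every left translation op y has a right
   inverse, hence is a bijection when the carrier is finite; E' then follows by
   cancelling op x in the instance of E at (op x x, x, x). *)

From Stdlib Require Import ZArith Lia.
From mathcomp Require Import all_boot.

Lemma Zdiv2_spec (w : Z) : exists r, (w = 2 * Z.div w 2 + r /\ 0 <= r < 2)%Z.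
Proof.
exists (Z.modulo w 2); split; first exact: Z.div_mod.
exact: Z.mod_pos_bound.
Qed.

Lemma zop_E : satisfies_E zop.
Proof.
move=> x y z; rewrite /zop.
have [r1 [Hz Bz]] := Zdiv2_spec z.
have [r2 [Hx Bx]] := Zdiv2_spec (2 * x - z / 2)%Z.
have [r3 [Hy By]] := Zdiv2_spec (2 * (2 * y - (2 * x - z / 2) / 2) - z / 2)%Z.
lia.
Qed.

Lemma zop_not_E' : ~ satisfies_E' zop.
Proof. by move=> /(_ 1%Z). Qed.

Lemma E_not_implies_E' :
  ~ (forall (T : Type) (op : T -> T -> T), satisfies_E op -> satisfies_E' op).
Proof. by move=> HEE'; exact/zop_not_E'/HEE'/zop_E. Qed.

Section FiniteMagma.

Variables (T : finType) (op : T -> T -> T).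
Hypothesis HE : satisfies_E op.

Lemma E_lmul_rcancel (y : T) : cancel (fun w => op (op y (op w w)) w) (op y).
Proof. by move=> w; rewrite -HE. Qed.

Lemma E_lmul_inj (y : T) : injective (op y).
Proof. exact/can_inj/canF_sym/E_lmul_rcancel. Qed.

Lemma E_implies_E'_fin : satisfies_E' op.
Proof. by move=> x; apply: (@E_lmul_inj x); rewrite -HE. Qed.

End FiniteMagma.

Theorem mainTheorem17 :
  (* (a) *)
  (satisfies_E zop /\ ~ satisfies_E' zop /\
   ~ (forall (T : Type) (op : T -> T -> T), satisfies_E op -> satisfies_E' op)) /\
  (* (b) *)
  (forall (T : finType) (op : T -> T -> T), satisfies_E op -> satisfies_E' op).
Proof.
split; first by split; [exact: zop_E | split; [exact: zop_not_E' | exact: E_not_implies_E']].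
exact: E_implies_E'_fin.
Qed.
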